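(* Let $\mathbb{F}$ be a field of characteristic $2$, $V$ a finite-dimensional $\mathbb{F}$-vector space and $b$ a non-degenerate symmetric bilinear form on $V$. Let $\mathcal{V}$ be a linear subspace of $\mathcal{S}_b$ all of whose elements are nilpotent. Let $x \in V\setminus\{0\}$ with $b(x,x)=0$, let $u \in \mathcal{V}$ with $b(x,u(x))=0$, and let $y \in \{x\}^\perp \setminus \mathbb{F}x$ be such that $x \wedge_b y \in \mathcal{V}$. Then $b_a(u(x), y) = 0$.
   Context: $\mathcal{S}_b$ is the space of $b$-symmetric endomorphisms of $V$ (those $u$ for which $(z,w)\mapsto b(z,u(w))$ is symmetric). $\{x\}^\perp=\{z\in V: b(x,z)=0\}$. For $x,y\in V$, $x \wedge_b y$ is the endomorphism $z \mapsto b(y,z)\,x - b(x,z)\,y$. With $Q(z)=b(z,z)$ and $\sqrt{\cdot}$ the (unique) square root in an algebraic closure $\overline{\mathbb{F}}$ of $\mathbb{F}$, the a-transform of $b$ is $b_a(z,w) := b(z,w) + \sqrt{Q(z)Q(w)} \in \overline{\mathbb{F}}$. *)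

From HB Require Import structures.
From mathcomp Require Import all_boot all_order all_algebra all_field.
Set Implicit Arguments. Unset Strict Implicit. Unset Printing Implicit Defensive.
Import GRing.Theory.
Local Open Scope ring_scope.

Section CharTwoForms.
Variables (F : fieldType) (V : vectType F).

Definition bilinear_bform (b : V -> V -> F) : Prop :=
  (forall (a : F) (x y z : V), b (a *: x + y) z = a * b x z + b y z) /\
  (forall (a : F) (x y z : V), b z (a *: x + y) = a * b z x + b z y).

Definition symmetric_bform (b : V -> V -> F) : Prop := forall x y, b x y = b y x.

Definition nondegenerate_bform (b : V -> V -> F) : Prop :=
  forall x, (forall y, b x y = 0) -> x = 0.

Definition b_symmetric (b : V -> V -> F) (u : 'End(V)) : Prop :=
  forall z w, b z (u w) = b w (u z).

Definition nilpotent_end (u : 'End(V)) : Prop :=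
  exists n : nat, forall v, iter n u v = 0.

Definition wedge_b (b : V -> V -> F) (x y : V) : 'End(V) :=
  linfun (fun z => b y z *: x - b x z *: y).

Definition Qform (b : V -> V -> F) (z : V) : F := b z z.
End CharTwoForms.

Lemma closed_sqrt_ex (L : closedFieldType) (a : L) : exists r : L, r * r == a.
Proof.
have [r Hr] := @solve_monicpoly L 2 (nth 0 [:: a]) isT.
exists r; apply/eqP; rewrite -expr2 Hr big_ord_recl big_ord1 /=.
by rewrite /= mul0r addr0 expr0 mulr1.
Qed.

Definition csqrt (L : closedFieldType) (a : L) : L := xchoose (closed_sqrt_ex a).

(* a-transform b_a(z,w) = b(z,w) + sqrt(Q(z)Q(w)), computed in an
   algebraically closed field L containing F via iota *)
Definition a_transform (F : fieldType) (V : vectType F) (L : closedFieldType)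
  (iota : {rmorphism F -> L}) (b : V -> V -> F) (z w : V) : L :=
  iota (b z w) + csqrt (iota (Qform b z * Qform b w)).

From HB Require Import structures.
From mathcomp Require Import all_boot all_order all_algebra all_field.
From mathcomp Require Import ring.

(* Let P z w = sum_j b(z, u^j w) X^(j+1), the resolvent b(z, X (1 - X u)^-1 w)
   of the nilpotent u. By the matrix determinant lemma,
   P x x * P y y - P x y ^+ 2 + 1 is det(1 - X (u + x /\_b y)). It has no root:
   at a root s, a nonzero left kernel vector (al, be) of the 2x2 matrix
   [[P x x, P x y + 1], [P x y - 1, P y y]](s) gives a functional
   phi z = al P(z, x)(s) + be P(z, y)(s) with phi = s * phi o (u + x /\_b y),
   which vanishes as u + x /\_b y is nilpotent; but phi x = be and phi y = -al.
   Over the algebraically closed field the polynomial is therefore constant, and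
   since b(x,x) = b(x,u x) = b(x,y) = 0 its coefficient of X^4 is
   Q(u x) Q(y) - b(u x, y)^2. In characteristic 2 the square root of
   Q(u x) Q(y) is then b(u x, y), so b_a(u x, y) = 2 b(u x, y) = 0. *)

Set Implicit Arguments.
Unset Strict Implicit.
Unset Printing Implicit Defensive.
Import GRing.Theory.
Local Open Scope ring_scope.

Section BilinearForm.
Variables (F : fieldType) (V : vectType F) (b : V -> V -> F).
Hypotheses (b_bilinear : bilinear_bform b) (b_sym : symmetric_bform b).

Lemma bformDl z1 z2 w : b (z1 + z2) w = b z1 w + b z2 w.
Proof. by have := b_bilinear.1 1 z1 z2 w; rewrite scale1r mul1r. Qed.

Lemma bform0l w : b 0 w = 0.
Proof. by apply: (@addrI _ (b 0 w)); rewrite -bformDl !addr0. Qed.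

Lemma bform0r w : b w 0 = 0.
Proof. by rewrite b_sym bform0l. Qed.

Lemma bformZl a z w : b (a *: z) w = a * b z w.
Proof. by have := b_bilinear.1 a z 0 w; rewrite addr0 bform0l addr0. Qed.

Lemma bformNl z w : b (- z) w = - b z w.
Proof. by rewrite -scaleN1r bformZl mulN1r. Qed.

Lemma wedge_bE x y z : wedge_b b x y z = b y z *: x - b x z *: y.
Proof.
pose f z := b y z *: x - b x z *: y.
have f_lin : linear f.
  move=> a z1 z2; rewrite /f !b_bilinear.2.
  by rewrite !scalerDl scalerBr !scalerA opprD addrACA.
exact: (lfunE (HB.pack f (GRing.isLinear.Build _ _ _ _ f f_lin))).
Qed.

Lemma b_symmetric_iter u :
  b_symmetric b u -> forall j z w, b z (iter j u w) = b w (iter j u z).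
Proof.
move=> u_sym; elim=> [|j IHj] z w /=; first exact: b_sym.
by rewrite u_sym b_sym IHj -iterSr.
Qed.

End BilinearForm.

Lemma iter_nilpotent_eq0 (F : fieldType) (V : vectType F) (u : 'End(V)) n j v :
  (forall v, iter n u v = 0) -> (n <= j)%N -> iter j u v = 0.
Proof.
move=> u_nil /subnK <-; rewrite iterD u_nil.
by elim: (j - n)%N => //= i ->; rewrite linear0.
Qed.

Lemma sqrf_inj_pchar2 (R : idomainType) (r c : R) :
  2%N \in [pchar R] -> r ^+ 2 = c ^+ 2 -> r = c.
Proof.
move=> ch2 rc; apply/eqP; rewrite -subr_eq0 -sqrf_eq0 sqrrB (mulrn_pchar ch2).
by rewrite subr0 rc -mulr2n (mulrn_pchar ch2).
Qed.

Lemma det2_eq0_left_kernel (R : comNzRingType) (a b c d : R) :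
  a * d = b * c ->
  exists al be, [/\ (al != 0) || (be != 0), al * a + be * c = 0
                                           & al * b + be * d = 0].
Proof.
move=> det0.
have [a0 | nz_ac] := eqVneq (a, c) (0, 0); last first.
  exists c, (- a); split; [|ring|by rewrite mulNr det0; ring].
  by move: nz_ac; rewrite xpair_eqE negb_and oppr_eq0 orbC.
have [b0 | nz_bd] := eqVneq (b, d) (0, 0); last first.
  exists d, (- b); split; [|by rewrite mulNr -det0; ring|ring].
  by move: nz_bd; rewrite xpair_eqE negb_and oppr_eq0 orbC.
case: a0 b0 => -> -> [-> ->]; exists 1, 0.
by split; rewrite ?oner_eq0 //; ring.
Qed.

Lemma nilpotent_invariant_eq0 (F : fieldType) (V : vectType F) (L : pzRingType)
    (w : 'End(V)) (phi : V -> L) (s : L) m :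
  (forall v, iter m w v = 0) -> phi 0 = 0 ->
  (forall z, s * phi (w z) = phi z) -> forall z, phi z = 0.
Proof.
move=> w_nil phi0 phi_step z.
have phi_iter j z' : s ^+ j * phi (iter j w z') = phi z'.
  elim: j z' => [|j IHj] z'; first by rewrite expr0 mul1r.
  by rewrite iterSr exprS -mulrA IHj phi_step.
by rewrite -(phi_iter m) w_nil phi0 mulr0.
Qed.

Section ResolventPoly.
Variables (F : fieldType) (V : vectType F) (b : V -> V -> F).
Variables (L : fieldType) (iota : {rmorphism F -> L}) (u : 'End(V)) (n : nat).
Hypotheses (b_bilinear : bilinear_bform b) (b_sym : symmetric_bform b).
Hypotheses (u_sym : b_symmetric b u) (u_nil : forall v, iter n u v = 0).

Definition resolvent_poly z w : {poly L} :=
  \poly_(i < n.+1) if i is j.+1 then iota (b z (iter j u w)) else 0.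

Local Notation P := resolvent_poly.

Lemma coef_resolvent_poly z w i :
  (P z w)`_i = if i is j.+1 then iota (b z (iter j u w)) else 0.
Proof.
rewrite coef_poly; case: ltnP => [//|]; case: i => [//|j] /=.
by rewrite ltnS => /(iter_nilpotent_eq0 w u_nil) ->; rewrite bform0r ?rmorph0.
Qed.

Lemma resolvent_polyDl z1 z2 w : P (z1 + z2) w = P z1 w + P z2 w.
Proof.
apply/polyP => -[|j]; rewrite coefD !coef_resolvent_poly ?addr0 //.
by rewrite bformDl ?rmorphD.
Qed.

Lemma resolvent_polyZl a z w : P (a *: z) w = iota a *: P z w.
Proof.
apply/polyP => -[|j]; rewrite coefZ !coef_resolvent_poly ?mulr0 //.
by rewrite bformZl ?rmorphM.
Qed.

Lemma resolvent_polyNl z w : P (- z) w = - P z w.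
Proof. by rewrite -scaleN1r resolvent_polyZl rmorphN1 scaleN1r. Qed.

Lemma resolvent_poly0l w : P 0 w = 0.
Proof. by rewrite -(scale0r 0) resolvent_polyZl rmorph0 scale0r. Qed.

Lemma resolvent_polyC z w : P z w = P w z.
Proof.
by apply/polyP => -[|j]; rewrite !coef_resolvent_poly // (b_symmetric_iter b_sym u_sym).
Qed.

Lemma resolvent_poly_shift z w : 'X * P (u z) w = P z w - iota (b z w) *: 'X.
Proof.
apply/polyP => -[|[|j]]; rewrite coefXM coefB coefZ coefX !coef_resolvent_poly /=.
- by rewrite mulr0 subr0.
- by rewrite mulr1 subrr.
- by rewrite mulr0 subr0 b_sym u_sym b_sym.
Qed.

Variables (x y : V) (m : nat).
Hypothesis xy_nil : forall v, iter m (u + wedge_b b x y : 'End(V)) v = 0.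

Definition resolvent_det : {poly L} := P x x * P y y - P x y ^+ 2 + 1.

Definition resolvent_form (al be s : L) z := al * (P z x).[s] + be * (P z y).[s].

Lemma resolvent_form_step al be s :
  let phi := resolvent_form al be s in phi x = be -> phi y = - al ->
  forall z, s * phi ((u + wedge_b b x y : 'End(V)) z) = phi z.
Proof.
move=> phi phi_x phi_y z.
have phi_lin : phi (u z + (b y z *: x - b x z *: y)) =
    phi (u z) + iota (b y z) * phi x - iota (b x z) * phi y.
  rewrite /phi /resolvent_form !resolvent_polyDl !resolvent_polyNl.
  by rewrite !resolvent_polyZl !(hornerD, hornerN, hornerZ); ring.
have shift w : s * (P (u z) w).[s] = (P z w).[s] - iota (b z w) * s.
  by have := congr1 (horner^~ s) (resolvent_poly_shift z w); rewrite !hornerE.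
have phi_shift :
    s * phi (u z) = phi z - s * (al * iota (b z x) + be * iota (b z y)).
  by rewrite /phi /resolvent_form mulrDr mulrCA [s * (be * _)]mulrCA !shift; ring.
rewrite add_lfunE wedge_bE // phi_lin phi_x phi_y mulrDr mulrDr phi_shift.
by rewrite [b z x]b_sym [b z y]b_sym; ring.
Qed.

Lemma resolvent_det_neq0 s : resolvent_det.[s] != 0.
Proof.
rewrite !hornerE; set X := (P x x).[s]; set Y := (P y y).[s]; set r := (P x y).[s].
apply/negP => /eqP det0.
have XY : X * Y = (r + 1) * (r - 1).
  by apply/eqP; rewrite -subr_eq0 -det0; apply/eqP; ring.
have [al [be [nz_ab ker_x ker_y]]] := det2_eq0_left_kernel XY.
have phi_x : resolvent_form al be s x = be.
  apply/eqP; rewrite -subr_eq0 -ker_x; apply/eqP.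
  by rewrite /resolvent_form -/X -/r; ring.
have phi_y : resolvent_form al be s y = - al.
  apply/eqP; rewrite -subr_eq0 opprK -ker_y; apply/eqP.
  by rewrite /resolvent_form resolvent_polyC -/Y -/r; ring.
have phi0 : resolvent_form al be s 0 = 0.
  by rewrite /resolvent_form !resolvent_poly0l !horner0 !mulr0 addr0.
have phi_eq0 :=
  nilpotent_invariant_eq0 xy_nil phi0 (resolvent_form_step phi_x phi_y).
by move: nz_ab; rewrite -phi_x -oppr_eq0 -phi_y !phi_eq0 eqxx.
Qed.

Lemma coef4_resolvent_det : b x x = 0 -> b x (u x) = 0 -> b x y = 0 ->
  resolvent_det`_4 = iota (b (u x) (u x) * b y y) - iota (b (u x) y) ^+ 2.
Proof.
move=> bxx bxux bxy.
rewrite /resolvent_det coefD coef1 coefB expr2 !coefM !big_ord_recr !big_ord0 /=.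
rewrite !coef_resolvent_poly /= bxx bxux bxy rmorph0 rmorphM.
by rewrite (u_sym x (u x)) (u_sym x y) [b y (u x)]b_sym; ring.
Qed.

End ResolventPoly.

Lemma closed_noroot_coef_eq0 (L : closedFieldType) (p : {poly L}) i :
  (forall s, p.[s] != 0) -> (0 < i)%N -> p`_i = 0.
Proof.
move=> p_neq0 i_gt0; have /eqP p_const : size p == 1.
  by apply/negPn/closed_rootP => -[s /rootP/eqP]; rewrite (negbTE (p_neq0 s)).
by rewrite nth_default // p_const.
Qed.

Theorem lemma4p10 (F : fieldType) (V : vectType F) (b : V -> V -> F)
  (Vs : {vspace 'End(V)}) (x : V) (u : 'End(V)) (y : V) :
  (2%N \in [pchar F]) ->
  bilinear_bform b -> symmetric_bform b -> nondegenerate_bform b ->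
  (forall v, v \in Vs -> b_symmetric b v) ->
  (forall v, v \in Vs -> nilpotent_end v) ->
  x != 0 -> b x x = 0 ->
  u \in Vs -> b x (u x) = 0 ->
  b x y = 0 -> y \notin <[x]>%VS ->
  wedge_b b x y \in Vs ->
  forall (L : closedFieldType) (iota : {rmorphism F -> L}),
    a_transform iota b (u x) y = 0.
Proof.
move=> ch2 b_bilinear b_sym _ Vs_sym Vs_nil _ bxx uVs bxux bxy _ xyVs L iota.
have u_sym := Vs_sym u uVs.
have [n u_nil] := Vs_nil u uVs.
have [m xy_nil] := Vs_nil _ (memvD uVs xyVs).
have gram : iota (b (u x) (u x) * b y y) = iota (b (u x) y) ^+ 2.
  apply/eqP; rewrite -subr_eq0.
  rewrite -(coef4_resolvent_det iota b_bilinear b_sym u_sym u_nil) //; apply/eqP.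
  apply: closed_noroot_coef_eq0 => //.
  exact: (resolvent_det_neq0 iota b_bilinear b_sym u_sym u_nil xy_nil).
rewrite /a_transform /Qform /csqrt gram; set r := xchoose _.
have r2 : r ^+ 2 = iota (b (u x) y) ^+ 2.
  by rewrite expr2; apply/eqP/(xchooseP (closed_sqrt_ex _)).
have ch2L := rmorph_pchar iota ch2.
by rewrite (sqrf_inj_pchar2 ch2L r2) (addrr_pchar2 ch2L).
Qed.
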